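(* Let $p$ be a prime and let $\lambda$ be an element of order $k\geq 3$ in the multiplicative group $\mathbb{F}_p^*$. Then $$\rho(\lambda,p)\geq p^{1/\phi(k)}/\sqrt{8},$$ where $\phi$ is Euler's totient function.
   Context: For $\mathbf{h}=(h_1,h_2)\in\mathbb{Z}^2$ let $r(\mathbf{h})=\max\{1,|h_1|\}\cdot\max\{1,|h_2|\}$. For $\lambda\in\{1,\dots,p-1\}$ define $\rho(\lambda,p)=\min r(\mathbf{h})$, the minimum taken over all nonzero $\mathbf{h}=(h_1,h_2)\in\mathbb{Z}^2$ satisfying $h_1+h_2\lambda\equiv 0\pmod p$ (here $\lambda$ is identified with an integer representative). *)

From Stdlib Require Import Reals ClassicalEpsilon.
From mathcomp Require Import all_boot all_order all_algebra.
Set Implicit Arguments. Unset Strict Implicit. Unset Printing Implicit Defensive.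
Import GRing.Theory Num.Theory.

Local Open Scope ring_scope.

Definition rfun (h1 h2 : int) : nat := (maxn 1 (absz h1) * maxn 1 (absz h2))%N.

Definition admissible (p : nat) (lam h1 h2 : int) : Prop :=
  (h1 != 0 \/ h2 != 0) /\ (p%:Z %| h1 + h2 * lam)%Z.

Definition rho_val (p : nat) (lam : int) (m : nat) : Prop :=
  exists h1 h2 : int, admissible p lam h1 h2 /\ rfun h1 h2 = m.

Definition rho_valb (p : nat) (lam : int) (m : nat) : bool :=
  if excluded_middle_informative (rho_val p lam m) then true else false.

Lemma rho_valbP p lam m : rho_valb p lam m = true <-> rho_val p lam m.
Proof.
rewrite /rho_valb; case: excluded_middle_informative => //; split => // /[swap].
Qed.

Lemma rho_val_ex (p : nat) (lam : int) (hp : (0 < p)%N) :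
  exists m, rho_valb p lam m.
Proof.
suff [m hm] : exists m, rho_val p lam m by exists m; apply/rho_valbP.
exists (rfun (Posz p) 0); exists (Posz p), 0; split => //; split.
- by left; rewrite eqz_nat -lt0n.
- by rewrite mul0r addr0 dvdzz.
Qed.

Definition rho (p : nat) (lam : int) (hp : (0 < p)%N) : nat :=
  ex_minn (rho_val_ex lam hp).

Definition has_order_mod (p : nat) (lam : int) (k : nat) : Prop :=
  (0 < k)%N /\ (lam ^+ k == 1 %[mod p%:Z])%Z /\
  (forall j : nat, (0 < j)%N -> (j < k)%N -> ~~ (lam ^+ j == 1 %[mod p%:Z])%Z).

From Stdlib Require Import Reals Lra.
From mathcomp Require Import all_boot all_order all_algebra.
From mathcomp Require Import algC cyclotomic.
From mathcomp Require Import ring zify.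

(* Let h = (h1, h2) be admissible with h2 <> 0 and n = phi(k).  Modulo p, -h1 = h2 lam
   and lam is a primitive k-th root of unity, hence a root of the cyclotomic polynomial
   Phi_k; so p divides the integer N = h2^n Phi_k(-h1/h2) = sum_i Phi_k[i] (-h1)^i h2^(n-i).
   Over C the roots of Phi_k are the primitive k-th roots of unity: none is real when
   k >= 3, and all have modulus 1.  Hence N <> 0 and |N| <= (|h1| + |h2|)^n <= (2 r(h))^n,
   so p <= (2 r(h))^n.  When h2 = 0, p divides h1 <> 0 directly.  This gives
   rho >= p^(1/n) / 2, stronger than the claim. *)

Set Implicit Arguments.
Unset Strict Implicit.
Unset Printing Implicit Defensive.
Import Order.TTheory GRing.Theory Num.Theory.

Section CyclotomicBounds.
Local Open Scope ring_scope.

Definition homog_eval (R : nzRingType) (P : {poly R}) (n : nat) (a b : R) : R :=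
  \sum_(i < n.+1) P`_i * a ^+ i * b ^+ (n - i).

Lemma homog_evalM (R : comNzRingType) (P : {poly R}) n (b x : R) :
  (size P <= n.+1)%N -> homog_eval P n (b * x) b = b ^+ n * P.[x].
Proof.
move=> szP; rewrite (horner_coef_wide _ szP) mulr_sumr; apply: eq_bigr => i _.
have -> : b ^+ n = b ^+ (n - i) * b ^+ i by rewrite -exprD subnK // -ltnS.
by rewrite exprMn; ring.
Qed.

Lemma rmorph_homog_eval (R S : nzRingType) (f : {rmorphism R -> S}) P n a b :
  f (homog_eval P n a b) = homog_eval (map_poly f P) n (f a) (f b).
Proof.
by rewrite rmorph_sum; apply: eq_bigr => i _; rewrite !rmorphM !rmorphXn coef_map.
Qed.


Lemma prim_root_norm1 (R : numDomainType) k (z : R) :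
  k.-primitive_root z -> `|z| = 1.
Proof.
move=> pz; apply/eqP; rewrite -(pexpr_eq1 (prim_order_gt0 pz)) // -normrX.
by rewrite prim_expr_order // normr1.
Qed.

Lemma real_prim_root_order_le2 (R : numDomainType) k (y : R) :
  k.-primitive_root y -> y \is Num.real -> (k <= 2)%N.
Proof.
move=> py real_y; apply: dvdn_leq => //; rewrite (prim_order_dvd py).
by rewrite -real_normK // (prim_root_norm1 py) expr1n.
Qed.

Lemma norm_horner_prod_XsubC_le (R : numDomainType) (I : Type) (s : seq I)
    (F : I -> R) (y : R) :
  (forall i, `|F i| <= 1) ->
  `|(\prod_(i <- s) ('X - (F i)%:P)).[y]| <= (`|y| + 1) ^+ size s.
Proof.
move=> F_le1; elim: s => [|i s IHs]; first by rewrite big_nil hornerC normr1.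
rewrite big_cons hornerM normrM exprS hornerXsubC ler_pM //.
by rewrite (le_trans (ler_normB _ _)) // lerD2l.
Qed.

Lemma norm_horner_cyclotomic_le (R : numDomainType) (z : R) k y :
  `|z| <= 1 -> `|(cyclotomic z k).[y]| <= (`|y| + 1) ^+ totient k.
Proof.
move=> z_le1; have := size_cyclotomic z k.
rewrite /cyclotomic -big_filter size_prod_XsubC => -[<-].
by apply: norm_horner_prod_XsubC_le => i; rewrite normrX exprn_ile1.
Qed.

Notation PhiC k := (map_poly (intr : int -> algC) 'Phi_k).

Lemma norm_horner_Cyclotomic_le k y :
  (0 < k)%N -> `|(PhiC k).[y]| <= (`|y| + 1) ^+ totient k.
Proof.
move=> k0; have [z pz] := C_prim_root_exists k0.
by rewrite (Cintr_Cyclotomic pz) norm_horner_cyclotomic_le // (prim_root_norm1 pz).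
Qed.

Lemma horner_Cyclotomic_real_neq0 k y :
  (2 < k)%N -> y \is Num.real -> (PhiC k).[y] != 0.
Proof.
move=> k2 real_y; have [z pz] := C_prim_root_exists (ltnW (ltnW k2)).
rewrite (Cintr_Cyclotomic pz) -/(root _ y) root_cyclotomic //.
by apply: contraTN k2 => /real_prim_root_order_le2 /(_ real_y); rewrite leqNgt.
Qed.


Lemma size_map_Cyclotomic (R : nzRingType) (f : {rmorphism int -> R}) k :
  (size (map_poly f 'Phi_k) <= (totient k).+1)%N.
Proof. by rewrite (leq_trans (size_poly _ _)) // size_Cyclotomic. Qed.

Lemma intr_homog_Cyclotomic k (a b : int) : b != 0 ->
  (homog_eval 'Phi_k (totient k) a b)%:~R
    = (b%:~R : algC) ^+ totient k * (PhiC k).[a%:~R / b%:~R].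
Proof.
move=> b0; have b0C : (b%:~R : algC) != 0 by rewrite intr_eq0.
rewrite rmorph_homog_eval -homog_evalM ?size_map_Cyclotomic //.
by rewrite mulrC divfK.
Qed.

Lemma homog_Cyclotomic_neq0 k (a b : int) :
  (2 < k)%N -> b != 0 -> homog_eval 'Phi_k (totient k) a b != 0.
Proof.
move=> k2 b0; rewrite -(intr_eq0 algC) intr_homog_Cyclotomic //.
rewrite mulf_neq0 ?expf_neq0 ?intr_eq0 //.
by rewrite horner_Cyclotomic_real_neq0 // rpredM ?rpredV ?realz.
Qed.

Lemma norm_homog_Cyclotomic_le k (a b : int) : (0 < k)%N -> b != 0 ->
  `|homog_eval 'Phi_k (totient k) a b| <= (`|a| + `|b|) ^+ totient k.
Proof.
move=> k0 b0; have b0C : (b%:~R : algC) != 0 by rewrite intr_eq0.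
rewrite -(ler_int algC) intr_norm intr_homog_Cyclotomic // normrM normrX.
rewrite rmorphXn rmorphD /= !intr_norm.
have -> : `|a%:~R| + `|b%:~R| = `|b%:~R| * (`|a%:~R / b%:~R| + 1) :> algC.
  rewrite mulrDr mulr1 normrM normrV ?unitfE // mulrCA mulfV ?normr_eq0 //.
  by rewrite mulr1 addrC.
by rewrite exprMn ler_wpM2l ?exprn_ge0 ?norm_horner_Cyclotomic_le.
Qed.

Lemma root_Cyclotomic_prim_root (R : idomainType) k (x : R) :
  k.-primitive_root x -> root (map_poly intr 'Phi_k) x.
Proof.
move=> pk; have k0 := prim_order_gt0 pk.
have prod_eval n : (0 < n)%N ->
    \prod_(d <- divisors n) (map_poly intr 'Phi_d).[x] = x ^+ n - 1.
  move=> n0; rewrite -horner_prod -rmorph_prod /= prod_Cyclotomic //.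
  by rewrite rmorphB /= map_polyXn rmorph1 !hornerE.
have := prod_eval k k0; rewrite prim_expr_order // subrr => /eqP.
rewrite prodf_seq_eq0 => /hasP[d dk /eqP Phid_x].
have d_dvd_k : (d %| k)%N by rewrite dvdn_divisors.
suff -> : k = d by apply/rootP.
apply/eqP; rewrite eqn_dvd d_dvd_k andbT (prim_order_dvd pk) -subr_eq0.
have d0 := dvdn_gt0 k0 d_dvd_k.
rewrite -prod_eval // (big_rem d) /= ?Phid_x ?mul0r //.
by rewrite -dvdn_divisors.
Qed.


Lemma Fp_intr_eq0 p (z : int) : prime p -> ((z%:~R : 'F_p) == 0) = (p%:Z %| z)%Z.
Proof. by move=> hp; rewrite (dvdz_pcharf (pchar_Fp hp)). Qed.

Lemma has_order_mod_prim_root p (lam : int) k :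
  prime p -> has_order_mod p lam k -> k.-primitive_root (lam%:~R : 'F_p).
Proof.
move=> hp [k0 [lamk lam_min]].
have Fp_expr_eq1 j : ((lam%:~R : 'F_p) ^+ j == 1) = (lam ^+ j == 1 %[mod p])%Z.
  by rewrite eqz_mod_dvd -Fp_intr_eq0 // rmorphB rmorphXn rmorph1 subr_eq0.
have [m pm m_dvd_k] := prim_order_exists k0 (eqP (etrans (Fp_expr_eq1 k) lamk)).
have m0 := prim_order_gt0 pm.
suff <- : m = k by [].
apply/eqP; rewrite eqn_leq dvdn_leq //=; apply: contraT; rewrite -ltnNge => mk.
by rewrite -(negbTE (lam_min m m0 mk)) -Fp_expr_eq1 prim_expr_order.
Qed.

Lemma dvdz_homog_Cyclotomic p (lam h1 h2 : int) k :
  prime p -> k.-primitive_root (lam%:~R : 'F_p) -> (p%:Z %| h1 + h2 * lam)%Z ->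
  (p%:Z %| homog_eval 'Phi_k (totient k) (- h1) h2)%Z.
Proof.
move=> hp pk p_dvd; rewrite -Fp_intr_eq0 // rmorph_homog_eval /=.
have -> : ((- h1)%:~R : 'F_p) = h2%:~R * lam%:~R.
  apply/eqP; rewrite -subr_eq0 -rmorphM -rmorphB Fp_intr_eq0 //.
  by rewrite -opprD rpredN.
rewrite homog_evalM ?size_map_Cyclotomic //.
by rewrite (rootP (root_Cyclotomic_prim_root pk)) mulr0.
Qed.

End CyclotomicBounds.

Lemma admissible_le_expn_norm_add p (lam h1 h2 : int) k :
  prime p -> has_order_mod p lam k -> (2 < k)%N -> admissible p lam h1 h2 ->
  (p <= (`|h1| + `|h2|) ^ totient k)%N.
Proof.
move=> hp hord k2 [h_neq0 p_dvd]; have k0 : (0 < k)%N by apply: ltnW (ltnW k2).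
have [h2_eq0 | h2_neq0] := eqVneq h2 0.
  move: h_neq0 p_dvd; rewrite h2_eq0 mul0r addr0 addn0 => -[h1_neq0 | //] p_dvd.
  have h1_gt0 : (0 < `|h1|)%N by rewrite absz_gt0.
  apply: leq_trans (dvdn_leq h1_gt0 p_dvd) _.
  by rewrite -{1}(expn1 `|h1|) leq_pexp2l // totient_gt0.
have := dvdz_homog_Cyclotomic hp (has_order_mod_prim_root hp hord) p_dvd.
have := norm_homog_Cyclotomic_le (- h1) k0 h2_neq0.
have := homog_Cyclotomic_neq0 (- h1) k2 h2_neq0.
set N := homog_eval _ _ _ _ => N_neq0 N_le p_dvd_N.
apply: leq_trans (dvdn_leq _ p_dvd_N) _; first by rewrite absz_gt0.
rewrite -lez_nat -[X in (_ <= X)%R]natz natrX natrD !natz !abszE -(normrN h1).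
exact: N_le.
Qed.

Lemma norm_add_le_rfun (h1 h2 : int) : (`|h1| + `|h2| <= 2 * rfun h1 h2)%N.
Proof.
rewrite /rfun; have := leq_maxl 1 `|h1|; have := leq_maxr 1 `|h1|.
have := leq_maxl 1 `|h2|; have := leq_maxr 1 `|h2|.
set m1 := maxn 1 `|h1|; set m2 := maxn 1 `|h2|; nia.
Qed.

Lemma admissible_le_expn_rfun p (lam h1 h2 : int) k :
  prime p -> has_order_mod p lam k -> (2 < k)%N -> admissible p lam h1 h2 ->
  (p <= (2 * rfun h1 h2) ^ totient k)%N.
Proof.
move=> hp hord k2 adm; apply: leq_trans (admissible_le_expn_norm_add hp hord k2 adm) _.
by rewrite leq_exp2r ?norm_add_le_rfun // totient_gt0 ltnW // ltnW.
Qed.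

Lemma rho_val_rho p (lam : int) (hp : (0 < p)%N) : rho_val p lam (rho lam hp).
Proof. by rewrite /rho; case: ex_minnP => m /rho_valbP. Qed.

Section RealBound.
Local Open Scope R_scope.

Lemma INR_expn (m n : nat) : INR (m ^ n) = INR m ^ n.
Proof. by elim: n => [|n IHn] //; rewrite expnS mult_INR IHn. Qed.

Lemma Rpower_inv_le (p m n : nat) :
  (0 < p)%N -> (0 < n)%N -> (p <= m ^ n)%N -> Rpower (INR p) (/ INR n) <= INR m.
Proof.
move=> p0 n0 p_le.
have m0 : (0 < m)%N by case: m p_le => //; rewrite exp0n //; case: p p0.
have INRp_gt0 : 0 < INR p by apply: lt_0_INR; apply/ssrnat.ltP.
have INRm_gt0 : 0 < INR m by apply: lt_0_INR; apply/ssrnat.ltP.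
have INRn_gt0 : 0 < INR n by apply: lt_0_INR; apply/ssrnat.ltP.
have -> : INR m = Rpower (INR m ^ n) (/ INR n).
  by rewrite -(@Rpower_pow n _ INRm_gt0) Rpower_mult Rinv_r ?Rpower_1 //; lra.
apply: Rle_Rpower_l; first by apply/Rlt_le/Rinv_0_lt_compat.
by split=> //; rewrite -INR_expn; apply/le_INR/ssrnat.leP.
Qed.

Lemma Rpower_inv_div_sqrt8_le (p r n : nat) :
  (0 < p)%N -> (0 < n)%N -> (p <= (2 * r) ^ n)%N ->
  Rpower (INR p) (INR 1 / INR n) / sqrt (INR 8) <= INR r.
Proof.
move=> p0 n0 p_le; have := Rpower_inv_le p0 n0 p_le.
have -> : INR 1 / INR n = / INR n by rewrite /Rdiv /= Rmult_1_l.
have sqrt8_ge2 : 2 <= sqrt (INR 8).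
  by rewrite -(sqrt_square 2); [apply: sqrt_le_1_alt; rewrite /=; lra | lra].
set x := Rpower _ _; rewrite mult_INR [INR 2]/= => x_le.
have x_gt0 : 0 < x by apply: exp_pos.
apply: (Rle_trans _ (x / 2)); last lra.
by apply/Rmult_le_compat_l/Rinv_le_contravar; lra.
Qed.

End RealBound.

Theorem lemma4p6 (p : nat) (hpr : prime p) (lam : int) (k : nat)
  (hlam1 : (1 <= lam)%R) (hlam2 : (lam <= (p%:Z - 1))%R)
  (hord : has_order_mod p lam k) (hk : (3 <= k)%N) :
  Rle (Rdiv (Rpower (INR p) (Rdiv (INR 1) (INR (totient k)))) (sqrt (INR 8)))
      (INR (rho lam (prime_gt0 hpr))).
Proof.
have [h1 [h2 [adm <-]]] := rho_val_rho lam (prime_gt0 hpr).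
apply: Rpower_inv_div_sqrt8_le (prime_gt0 hpr) _ _.
  by rewrite totient_gt0 (leq_trans _ hk).
exact: admissible_le_expn_rfun hpr hord hk adm.
Qed.
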